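(* For $n>0$, $a(n)=n$ if and only if the Fibonacci representation $(n)_F$ belongs to the regular language $1\,(00100^*1)^*\,\{\epsilon,\,01,\,010,\,0100\}$.
   Context: Let $(F_n)_{n\ge 0}$ be the Fibonacci numbers: $F_0=0$, $F_1=1$, $F_n=F_{n-1}+F_{n-2}$ for $n\ge 2$. Define $(a(n))_{n\ge 0}$ (OEIS A105774) by $a(0)=0$, $a(1)=1$, and for $n\ge 2$, $a(n)=F_{j+1}-a(n-F_j)$, where $j\ge 2$ is the unique index with $F_j<n\le F_{j+1}$. The Fibonacci (Zeckendorf) representation $(n)_F$ of $n\ge1$ is the unique binary string $e_1\cdots e_t$ with $e_1=1$, no two consecutive $1$'s, and $n=\sum_{i=1}^t e_iF_{t-i+2}$. In the regular expression, juxtaposition is concatenation, $\epsilon$ is the empty string, $w^*$ denotes zero or more repetitions of $w$, and the star applies to the immediately preceding symbol or parenthesized group (so $00100^*1$ denotes the strings $0010\,0^k\,1$, $k\ge 0$); a set of strings in braces denotes a choice of one of them. *)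

From mathcomp Require Import all_boot all_order all_algebra.
Set Implicit Arguments. Unset Strict Implicit. Unset Printing Implicit Defensive.
Import GRing.Theory Num.Theory.

Fixpoint fib (n : nat) : nat :=
  match n with
  | 0 => 0
  | 1 => 1
  | (m.+1 as k).+1 => fib k + fib m
  end.

(* For n >= 2: the unique j >= 2 with F_j < n <= F_{j+1}.
   It is the least j >= 2 with n <= F_{j+1}; we search j = i + 2 for i < n
   (enough, since F_{n+3} >= n). *)
Definition fibidx (n : nat) : nat :=
  (find (fun i => n <= fib (i + 3)) (iota 0 n)) + 2.

(* a(0) = 0, a(1) = 1, a(n) = F_{j+1} - a(n - F_j) for n >= 2 (OEIS A105774),
   computed in int (no truncated subtraction); the fuel argument n suffices
   since n - F_j < n. *)
Fixpoint a_aux (fuel n : nat) : int :=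
  match fuel with
  | 0 => 0
  | fuel'.+1 =>
      if n <= 1 then Posz n
      else let j := fibidx n in (Posz (fib j.+1) - a_aux fuel' (n - fib j))%R
  end.

Definition a (n : nat) : int := a_aux n n.

Fixpoint fibval (w : seq bool) : nat :=
  match w with
  | [::] => 0
  | b :: w' => b * fib (size w' + 2) + fibval w'
  end.

Definition is_fib_rep (w : seq bool) (n : nat) : Prop :=
  [/\ head false w = true,
      (forall i, i.+1 < size w -> ~~ (nth false w i && nth false w i.+1))
    & fibval w = n].

Definition block (k : nat) : seq bool :=
  [:: false; false; true; false] ++ nseq k false ++ [:: true].

Definition inL (w : seq bool) : Prop :=
  exists (ks : seq nat) (s : seq bool),
    s \in [:: [::]; [:: false; true]; [:: false; true; false];
              [:: false; true; false; false]]
    /\ w = true :: flatten (map block ks) ++ s.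

(* A fixed point n > 1 of [a] other than 4 has the form F_{k+4} + F_{k+1} + m
   with 1 <= m <= F_k and m itself a fixed point: two unfoldings of the
   recurrence, together with 1 <= a(x) <= F_k for 1 <= x <= F_k, force j = i + 3
   where F_j < n <= F_{j+1} and F_i < n - F_j <= F_{i+1}.  Conversely
   a(F_{k+4} + F_{k+1} + m) = F_{k+4} + F_{k+1} + a(m).  On Zeckendorf words,
   adding F_{k+4} + F_{k+1} to a number m < F_k written 1u turns 1u into
   1 0010 0^r 1u, i.e. prepends a block of the language; the recursion bottoms
   out at the fixed points 1, 4, 7, 11, written 1, 101, 1010, 10100.  The case
   m = F_k only arises for m = 1, as no Fibonacci number > 1 is fixed. *)

From mathcomp Require Import all_boot all_order all_algebra zify.
Set Implicit Arguments. Unset Strict Implicit. Unset Printing Implicit Defensive.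

Arguments fib : simpl never.

Lemma fibSS k : fib k.+2 = fib k.+1 + fib k. Proof. by []. Qed.

Lemma fib_leS k : fib k <= fib k.+1.
Proof. by case: k => [|k] //; rewrite fibSS leq_addr. Qed.

Lemma leq_fib : {homo fib : m n / m <= n}.
Proof. exact: homo_leq leqnn leq_trans fib_leS. Qed.

Lemma fib_gt0 k : (0 < fib k) = (0 < k).
Proof.
case: k => // k; elim: k => [|k IH] //.
by rewrite fibSS (leq_trans IH) ?leq_addr.
Qed.

Lemma fib_ltn_inv m n : fib m < fib n -> m < n.
Proof. by move=> lt_f; rewrite ltnNge; apply/negP => /leq_fib; rewrite leqNgt lt_f. Qed.

Lemma fib_between k j : fib k < fib j < fib k.+2 -> j = k.+1.
Proof. by case/andP=> /fib_ltn_inv lt_kj /fib_ltn_inv lt_jk; lia. Qed.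

Lemma ltn_fibSS k : k < fib k.+2.
Proof.
elim: k => [|k IH] //; rewrite fibSS.
by have := fib_gt0 k.+1; lia.
Qed.

Lemma fibidx_spec n : 1 < n ->
  [/\ 2 <= fibidx n, fib (fibidx n) < n & n <= fib (fibidx n).+1].
Proof.
move=> n_gt1; rewrite /fibidx.
case: findP => [/hasPn /(_ n.-2) | i i_lt found before].
  rewrite mem_iota (_ : n.-2 + 3 = n.-2.+1.+2); last by lia.
  by have := ltn_fibSS n.-2.+1; lia.
have := found 0; rewrite size_iota in i_lt; rewrite nth_iota // add0n => hi.
split; [by rewrite addn2 | | by rewrite addn2 -addn3].
case: i i_lt before {found hi} => [|i] // i_lt before.
have := before 0 i (ltnSn i); rewrite nth_iota ?add0n; last by lia.
by move=> /negbT; rewrite -ltnNge (_ : i + 3 = i.+1 + 2) //; lia.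
Qed.

Lemma fibidx_unique n j : 2 <= j -> fib j < n <= fib j.+1 -> fibidx n = j.
Proof.
move=> j_ge2 /andP [lo hi].
have n_gt1 : 1 < n by have := fib_gt0 j; lia.
have [_ lo' hi'] := fibidx_spec n_gt1.
have /fib_ltn_inv : fib j < fib (fibidx n).+1 by lia.
have /fib_ltn_inv : fib (fibidx n) < fib j.+1 by lia.
lia.
Qed.

Lemma a_aux_fuel f1 f2 m : m <= f1 -> m <= f2 -> a_aux f1 m = a_aux f2 m.
Proof.
elim: f1 f2 m => [|f IH] [|g] m //=.
- by rewrite leqn0 => /eqP ->.
- by move=> _; rewrite leqn0 => /eqP ->.
case: ifP => // /negbT; rewrite -ltnNge => m_gt1 m_le m_le'.
have [j_ge2 _ _] := fibidx_spec m_gt1.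
have fib_pos := fib_gt0 (fibidx m); congr (_ - _)%R; apply: IH; lia.
Qed.

Lemma a_rec n : 1 < n ->
  a n = (Posz (fib (fibidx n).+1) - a (n - fib (fibidx n)))%R.
Proof.
case: n => [|n] // n_gt1; rewrite /a [LHS]/= ifF; last by rewrite leqNgt n_gt1.
have [j_ge2 _ _] := fibidx_spec n_gt1.
have fib_pos := fib_gt0 (fibidx n.+1); congr (_ - _)%R; apply: a_aux_fuel; lia.
Qed.

Lemma a_recE n j : 2 <= j -> fib j < n <= fib j.+1 ->
  a n = (Posz (fib j.+1) - a (n - fib j))%R.
Proof.
move=> j_ge2 n_range; have n_gt1 : 1 < n by have := fib_gt0 j; lia.
by rewrite a_rec // (fibidx_unique j_ge2 n_range).
Qed.

Lemma a_range k x : 0 < x <= fib k -> (0 < a x <= Posz (fib k))%R.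
Proof.
elim/ltn_ind: x k => x IH k /andP [x_gt0 x_le].
have [x_gt1 | x_le1] := ltnP 1 x; last first.
  have x_eq1 : x = 1 by lia.
  by rewrite x_eq1 in x_le *; rewrite (_ : a 1 = 1%R) //; lia.
have [j_ge2 lo hi] := fibidx_spec x_gt1; rewrite a_rec //.
set j := fibidx x in j_ge2 lo hi *.
have fibSj : fib j.+1 = fib j + fib j.-1 by case: (j) j_ge2 => [|[|i]].
have /leq_fib : j < k by apply: fib_ltn_inv; lia.
have fib_pos := fib_gt0 j.
have : (0 < a (x - fib j) <= Posz (fib j.-1))%R by apply: IH; lia.
lia.
Qed.

Lemma a_fib_fixed k : a (fib k) = Posz (fib k) -> fib k <= 1.
Proof.
move=> fixed; rewrite leqNgt; apply/negP => fib_gt1.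
have [j_ge2 lo hi] := fibidx_spec fib_gt1.
move: fixed; rewrite a_rec //; set j := fibidx (fib k) in j_ge2 lo hi *.
have : (0 < a (fib k - fib j) <= Posz (fib j.+1))%R by apply: a_range; lia.
move=> a_pos fixed; have /fib_ltn_inv : fib k < fib j.+1 by lia.
by have /fib_ltn_inv := lo; lia.
Qed.

Lemma a_shift k m : 0 < k -> 0 < m <= fib k ->
  a (fib k.+4 + fib k.+1 + m) = (Posz (fib k.+4 + fib k.+1) + a m)%R.
Proof.
move=> k_gt0 m_range.
have fib_k2 := fibSS k; have fib_k3 := fibSS k.+1.
have fib_k4 := fibSS k.+2; have fib_k5 := fibSS k.+3.
rewrite (@a_recE _ k.+4) //; last by lia.
rewrite (_ : _ - fib k.+4 = fib k.+1 + m); last by lia.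
rewrite (@a_recE _ k.+1) //; last by lia.
by rewrite (_ : _ - fib k.+1 = m); lia.
Qed.

Lemma a_fixed_decomp n : 1 < n -> a n = Posz n ->
  n = 4 \/ exists k m,
    [/\ 0 < k, 0 < m <= fib k, n = fib k.+4 + fib k.+1 + m & a m = Posz m].
Proof.
move=> n_gt1; rewrite a_rec //.
move: (fibidx n) (fibidx_spec n_gt1) => [|[|j]] [// _ lo hi].
have fib_j3 := fibSS j.+1.
have [m_gt1 | m_le1] := ltnP 1 (n - fib j.+2); last first.
  have m_eq1 : n - fib j.+2 = 1 by lia.
  rewrite m_eq1 (_ : a 1 = 1%R) // => fixed; left.
  have : fib 2 < fib j.+1 < fib 4 by rewrite (_ : fib 2 = 1) // (_ : fib 4 = 3) //; lia.
  by case/fib_between=> j_eq; rewrite j_eq (_ : fib 4 = 3) // in m_eq1 lo; lia.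
rewrite a_rec //; set m := n - fib j.+2 in m_gt1 *.
have m_eq : m = n - fib j.+2 by [].
move: (fibidx m) (fibidx_spec m_gt1) => [|[|k]] [// _ lo' hi'] fixed; right.
have fib_k2 := fibSS k; have fib_k3 := fibSS k.+1.
have fib_k4 := fibSS k.+2; have fib_k5 := fibSS k.+3.
have rng : (0 < a (m - fib k.+2) <= Posz (fib k.+1))%R by apply: a_range; lia.
have /fib_between [j_eq] : fib k.+3 < fib j.+1 < fib k.+3.+2.
  by apply/andP; split; lia.
exists k.+1, (m - fib k.+2); rewrite j_eq in m_eq lo hi fixed fib_j3 *.
split=> //; lia.
Qed.

Definition no_adjacent_ones (w : seq bool) : bool := sorted (fun b c => ~~ (b && c)) w.

Lemma is_fib_repP w n :
  is_fib_rep w n <-> [/\ head false w, no_adjacent_ones w & fibval w = n].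
Proof.
have nthP := sortedP (e := fun b c => ~~ (b && c)) (s := w) false.
rewrite /is_fib_rep /no_adjacent_ones.
by split=> [[-> /nthP ? ->] | [-> /nthP ? ->]].
Qed.

Lemma fibval_cons b t : fibval (b :: t) = b * fib (size t).+2 + fibval t.
Proof. by rewrite /= addn2. Qed.

Lemma fibval_lt_head w :
  no_adjacent_ones w -> fibval w < fib ((size w).+1 + head false w).
Proof.
rewrite /no_adjacent_ones; elim: w => [|b u IH] // path_bu.
have /IH u_bound := path_sorted path_bu.
rewrite fibval_cons (_ : size (b :: u) = (size u).+1) //.
case: b path_bu => [path_u | _]; rewrite [head _ _]/= ?mul1n ?mul0n.
  have u_head : head false u = false by case: u path_u {IH u_bound} => [|[]].
  by rewrite u_head addn0 in u_bound; rewrite addn1 (fibSS (size u).+1); lia.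
by rewrite add0n; apply: leq_trans u_bound (leq_fib _); case: (head false u); lia.
Qed.

Lemma fibval_lt w : no_adjacent_ones w -> fibval w < fib (size w).+2.
Proof.
move=> /fibval_lt_head /leq_trans; apply; apply: leq_fib.
by case: (head false w); rewrite ?addn0 ?addn1.
Qed.

Lemma fibval_block r t : fibval (true :: block r ++ t) =
  fib (r + size t + 3).+4 + fib (r + size t + 3).+1 + fibval (true :: t).
Proof.
have fibval_zeros u : fibval (nseq r false ++ u) = fibval u by elim: r.
rewrite /block -!catA !cat_cons /= fibval_zeros.
have size_tail k u : size (nseq k false ++ u) = k + size u by rewrite size_cat size_nseq.
by rewrite !size_tail /= !mul0n !mul1n !add0n addnA; congr (fib _ + fib _ + _); lia.
Qed.

Lemma no_adjacent_ones_block r t :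
  no_adjacent_ones (true :: block r ++ t) = no_adjacent_ones (true :: t).
Proof.
rewrite /no_adjacent_ones /block -!catA /= cat_path.
have zeros : last false (nseq r false) = false /\
              path (fun b c => ~~ (b && c)) false (nseq r false) by elim: r.
by case: zeros => -> ->.
Qed.

Lemma inL_block r t : inL (true :: t) -> inL (true :: block r ++ t).
Proof. by case=> ks [S [S_end [->]]]; exists (r :: ks), S; rewrite catA. Qed.

Definition endings : seq (seq bool) :=
  [:: [::]; [:: false; true]; [:: false; true; false]; [:: false; true; false; false]].

Lemma ending_rep S : S \in endings ->
  is_fib_rep (true :: S) (fibval (true :: S)) /\ inL (true :: S).
Proof.
move=> S_end; split; last by exists [::], S.
by apply/is_fib_repP; split=> //; move: S_end; rewrite !inE => /or4P [] /eqP ->.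
Qed.

Lemma a_ending S : S \in endings -> a (fibval (true :: S)) = Posz (fibval (true :: S)).
Proof. by rewrite !inE => /or4P [] /eqP ->; vm_compute. Qed.

Lemma a_fixed_of_inL w : inL w -> no_adjacent_ones w -> a (fibval w) = Posz (fibval w).
Proof.
case=> ks [S [S_end ->]]; elim: ks => [|r ks IH]; first by move=> _; exact: a_ending.
change (flatten (map block (r :: ks))) with (block r ++ flatten (map block ks)).
rewrite -catA; set t := flatten (map block ks) ++ S.
rewrite fibval_block no_adjacent_ones_block => /[dup] /IH fixed /fibval_lt t_bound.
have m_gt0 : 0 < fibval (true :: t) by rewrite fibval_cons mul1n ltn_addr ?fib_gt0.
have /leq_fib fib_le : (size (true :: t)).+2 <= r + size t + 3 by rewrite /= addn3; lia.
by rewrite a_shift ?fixed -?PoszD //; lia.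
Qed.

Lemma rep_of_fixed n : 0 < n -> a n = Posz n -> exists w, is_fib_rep w n /\ inL w.
Proof.
elim/ltn_ind: n => n IH n_gt0 fixed.
have [n_gt1 | n_le1] := ltnP 1 n; last first.
  by rewrite (_ : n = 1); [exists [:: true]; exact: (@ending_rep [::]) | lia].
case: (a_fixed_decomp n_gt1 fixed) => [-> | [k [m [k_gt0 m_range n_eq m_fixed]]]].
  by exists [:: true; false; true]; exact: (@ending_rep [:: false; true]).
have m_lt_n : m < n by have := fib_gt0 k.+4; lia.
have m_gt0 : 0 < m by case/andP: m_range.
have [w [/is_fib_repP [w_head w_adj w_val] w_inL]] := IH m m_lt_n m_gt0 m_fixed.
case: w w_head w_adj w_val w_inL => [|[] t] // _ t_adj t_val t_inL.
have [m_lt_fib | fib_le_m] := ltnP m (fib k); last first.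
  have /a_fib_fixed fib_le1 : a (fib k) = Posz (fib k).
    by rewrite -(_ : m = fib k) //; lia.
  have : k < 3 by apply: fib_ltn_inv; rewrite (_ : fib 3 = 2) //; lia.
  rewrite n_eq (_ : m = 1); last by lia.
  case: k k_gt0 {m_range n_eq fib_le_m fib_le1} => [|[|[|]]] // _ _.
    by exists [:: true; false; true; false]; exact: (@ending_rep [:: false; true; false]).
  exists [:: true; false; true; false; false].
  exact: (@ending_rep [:: false; true; false; false]).
have /fib_ltn_inv t_short : fib (size t).+2 < fib k.
  by rewrite -t_val fibval_cons mul1n in m_lt_fib; lia.
exists (true :: block (k - (size t).+3) ++ t); split; last exact: inL_block.
apply/is_fib_repP; split; rewrite ?no_adjacent_ones_block //.
by rewrite fibval_block t_val n_eq (_ : k - (size t).+3 + size t + 3 = k) //; lia.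
Qed.

Unset Implicit Arguments.

Theorem theorem21 (n : nat) : 0 < n ->
  (a n = Posz n <-> exists w : seq bool, is_fib_rep w n /\ inL w).
Proof.
move=> n_gt0; split; first exact: rep_of_fixed.
by case=> w [/is_fib_repP [_ w_adj <-] w_inL]; apply: a_fixed_of_inL.
Qed.
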